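(* Let $\Sigma=I_d$, $\beta_*\in\mathbb{R}^d$, $\sigma^2\ge0$, $\lambda>0$, and let $\lambda_*>0$ be the solution of $n-\lambda/\lambda_*=\frac{d}{1+\lambda_*}$. Define $$\mathsf{R}_\lambda:=\frac{\lambda_*^2\langle\beta_*,\Sigma(\Sigma+\lambda_*I)^{-2}\beta_*\rangle}{1-n^{-1}\operatorname{Tr}(\Sigma^2(\Sigma+\lambda_*I)^{-2})}+\frac{\sigma^2\operatorname{Tr}(\Sigma^2(\Sigma+\lambda_*I)^{-2})}{n-\operatorname{Tr}(\Sigma^2(\Sigma+\lambda_*I)^{-2})},$$ $$\mathsf{N}_\lambda:=\langle\beta_*,\Sigma^2(\Sigma+\lambda_*I)^{-2}\beta_*\rangle+\frac{\operatorname{Tr}(\Sigma(\Sigma+\lambda_*I)^{-2})}{n}\cdot\frac{\lambda_*^2\langle\beta_*,\Sigma(\Sigma+\lambda_*I)^{-2}\beta_*\rangle}{1-n^{-1}\operatorname{Tr}(\Sigma^2(\Sigma+\lambda_*I)^{-2})}+\frac{\sigma^2\operatorname{Tr}(\Sigma(\Sigma+\lambda_*I)^{-2})}{n-\operatorname{Tr}(\Sigma^2(\Sigma+\lambda_*I)^{-2})}.$$ Then $$\big(\|\beta_*\|_2^2-\mathsf{R}_\lambda-\mathsf{N}_\lambda\big)\big(\|\beta_*\|_2^2+\mathsf{R}_\lambda-\mathsf{N}_\lambda\big)^2d+2\|\beta_*\|_2^2\Big(\big(\|\beta_*\|_2^2+\mathsf{R}_\lambda-\mathsf{N}_\lamb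da\big)^2-4\|\beta_*\|_2^2\mathsf{R}_\lambda\Big)\lambda=2\Big(\big(\mathsf{R}_\lambda-\mathsf{N}_\lambda\big)^2-\|\beta_*\|_2^4\Big)d\sigma^2.$$
   Context: $\mathsf{R}_\lambda$ and $\mathsf{N}_\lambda$ are the deterministic equivalents of the test risk $\mathbb{E}_\varepsilon\|\beta_*-\hat\beta\|_\Sigma^2$ and the squared norm $\mathbb{E}_\varepsilon\|\hat\beta\|_2^2$ of the ridge estimator $\hat\beta=(X^{\top}X+\lambda I)^{-1}X^{\top}y$ in linear regression with $n$ samples, feature covariance $\Sigma$, target $\beta_*$ and noise variance $\sigma^2$; they are defined by the formulas in the claim. *)

From mathcomp Require Import all_boot all_order all_algebra.
Set Implicit Arguments. Unset Strict Implicit. Unset Printing Implicit Defensive.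
Import Order.TTheory GRing.Theory Num.Theory.
Local Open Scope ring_scope.

Section Ridge.
Variable R : realFieldType.

Definition inner (d : nat) (u : 'cV[R]_d) (M : 'M[R]_d) (v : 'cV[R]_d) : R :=
  (u^T *m M *m v) 0 0.

Definition sqnorm (d : nat) (b : 'cV[R]_d) : R := \sum_(i < d) b i 0 ^+ 2.

Definition resolv2 (d : nat) (Sigma : 'M[R]_d) (lamstar : R) : 'M[R]_d :=
  invmx ((Sigma + lamstar%:M) *m (Sigma + lamstar%:M)).

Definition df2 (d : nat) (Sigma : 'M[R]_d) (lamstar : R) : R :=
  \tr (Sigma *m Sigma *m resolv2 Sigma lamstar).

Definition df1 (d : nat) (Sigma : 'M[R]_d) (lamstar : R) : R :=
  \tr (Sigma *m resolv2 Sigma lamstar).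

Definition ridgeR (n d : nat) (Sigma : 'M[R]_d) (beta : 'cV[R]_d)
    (sigma2 lamstar : R) : R :=
  lamstar ^+ 2 * inner beta (Sigma *m resolv2 Sigma lamstar) beta
    / (1 - (n%:R)^-1 * df2 Sigma lamstar)
  + sigma2 * df2 Sigma lamstar / (n%:R - df2 Sigma lamstar).

Definition ridgeN (n d : nat) (Sigma : 'M[R]_d) (beta : 'cV[R]_d)
    (sigma2 lamstar : R) : R :=
  inner beta (Sigma *m Sigma *m resolv2 Sigma lamstar) beta
  + df1 Sigma lamstar / n%:R *
      (lamstar ^+ 2 * inner beta (Sigma *m resolv2 Sigma lamstar) beta
         / (1 - (n%:R)^-1 * df2 Sigma lamstar))
  + sigma2 * df1 Sigma lamstar / (n%:R - df2 Sigma lamstar).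

End Ridge.

From mathcomp Require Import all_boot all_order all_algebra.
From mathcomp Require Import ring.
Import Order.TTheory GRing.Theory Num.Theory.
Local Open Scope ring_scope.

(** For [Sigma = I] every matrix quantity in [R_lambda] and [N_lambda] is a
    multiple of [||beta||^2] or of [d] with coefficients rational in
    [lamstar], so both reduce to explicit rational functions.  Eliminating
    [n] through the fixed-point equation [n = lam / lamstar + d / (1 + lamstar)]
    turns the claim into a polynomial identity in
    [lamstar, lam, d, ||beta||^2, sigma2]. *)

Section ScalarCovariance.
Variables (R : realFieldType) (d : nat).

Lemma resolv2_scalar (a t : R) :
  resolv2 (a%:M : 'M_d) t = ((a + t) ^+ 2)^-1%:M.
Proof. by rewrite /resolv2 -raddfD /= -scalar_mxM -expr2 invmx_scalar. Qed.

Lemma inner_scalar (b : 'cV[R]_d) (c : R) : inner b c%:M b = c * sqnorm b.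
Proof.
rewrite /inner mul_mx_scalar -scalemxAl mxE /sqnorm mxE; congr (_ * _).
by apply: eq_bigr => i _; rewrite !mxE expr2.
Qed.

Lemma df2_scalar (a t : R) :
  df2 (a%:M : 'M_d) t = d%:R * a ^+ 2 / (a + t) ^+ 2.
Proof. by rewrite /df2 resolv2_scalar -!scalar_mxM mxtrace_scalar; ring. Qed.

Lemma df1_scalar (a t : R) :
  df1 (a%:M : 'M_d) t = d%:R * a / (a + t) ^+ 2.
Proof. by rewrite /df1 resolv2_scalar -scalar_mxM mxtrace_scalar; ring. Qed.

End ScalarCovariance.

Section IsotropicCovariance.
Variables (R : realFieldType) (n d : nat) (beta : 'cV[R]_d) (s t : R).
Hypotheses (ht1 : 1 + t != 0) (hn : n%:R != 0 :> R)
  (hden : (1 + t) ^+ 2 * n%:R != d%:R :> R).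

Lemma ridgeR_isotropic :
  ridgeR n 1%:M beta s t
  = (t ^+ 2 * sqnorm beta * n%:R + s * d%:R) / ((1 + t) ^+ 2 * n%:R - d%:R).
Proof.
rewrite /ridgeR df2_scalar resolv2_scalar mul1mx inner_scalar.
by field; rewrite subr_eq0 hden ht1 hn.
Qed.

Lemma ridgeN_isotropic :
  ridgeN n 1%:M beta s t
  = sqnorm beta / (1 + t) ^+ 2
    + (t ^+ 2 * sqnorm beta * d%:R / (1 + t) ^+ 2 + s * d%:R)
      / ((1 + t) ^+ 2 * n%:R - d%:R).
Proof.
rewrite /ridgeN df1_scalar df2_scalar resolv2_scalar !mul1mx inner_scalar.
by field; rewrite subr_eq0 hden ht1 hn.
Qed.

End IsotropicCovariance.

Lemma fixed_point_denominator (F : fieldType) (t lam D : F) :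
  t != 0 -> 1 + t != 0 ->
  (1 + t) ^+ 2 * (lam / t + D / (1 + t)) - D
  = ((1 + t) ^+ 2 * lam + D * t ^+ 2) / t.
Proof. by move=> ht ht1; field; rewrite ht ht1. Qed.

Lemma isotropic_ridge_identity (F : fieldType) (t lam D B s : F) :
  t != 0 -> 1 + t != 0 -> (1 + t) ^+ 2 * lam + D * t ^+ 2 != 0 ->
  let N := lam / t + D / (1 + t) in
  let Rl := (t ^+ 2 * B * N + s * D) / ((1 + t) ^+ 2 * N - D) in
  let Nl := B / (1 + t) ^+ 2
            + (t ^+ 2 * B * D / (1 + t) ^+ 2 + s * D) / ((1 + t) ^+ 2 * N - D) in
  (B - Rl - Nl) * (B + Rl - Nl) ^+ 2 * D
  + 2 * B * ((B + Rl - Nl) ^+ 2 - 4 * B * Rl) * lam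
  = 2 * ((Rl - Nl) ^+ 2 - B ^+ 2) * D * s.
Proof.
move=> ht ht1 hE N Rl Nl.
rewrite /Rl /Nl /N fixed_point_denominator //.
by field; rewrite ht hE ht1.
Qed.

Theorem proposition12 (R : realFieldType) (n d : nat) (beta : 'cV[R]_d)
    (sigma2 lam lamstar : R)
    (hsigma : 0 <= sigma2) (hlam : 0 < lam) (hlamstar : 0 < lamstar)
    (hfix : n%:R - lam / lamstar = d%:R / (1 + lamstar)) :
  let Sigma : 'M[R]_d := 1%:M in
  let B := sqnorm beta in
  let Rl := ridgeR n Sigma beta sigma2 lamstar in
  let Nl := ridgeN n Sigma beta sigma2 lamstar in
  (B - Rl - Nl) * (B + Rl - Nl) ^+ 2 * d%:R
  + 2 * B * ((B + Rl - Nl) ^+ 2 - 4 * B * Rl) * lam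
  = 2 * ((Rl - Nl) ^+ 2 - B ^+ 2) * d%:R * sigma2.
Proof.
move=> Sigma B Rl Nl; set t := lamstar in hlamstar hfix Rl Nl *.
have ht_ge0 : 0 <= t := ltW hlamstar.
have ht1_gt0 : 0 < 1 + t by rewrite ltr_pwDl.
have ht : t != 0 by rewrite gt_eqF.
have ht1 : 1 + t != 0 by rewrite gt_eqF.
have hE_gt0 : 0 < (1 + t) ^+ 2 * lam + d%:R * t ^+ 2.
  by apply: ltr_pwDl; rewrite ?mulr_ge0 ?mulr_gt0 ?exprn_gt0 ?ler0n ?sqr_ge0.
have hN : n%:R = lam / t + d%:R / (1 + t) by rewrite -hfix addrC subrK.
have hn : n%:R != 0 :> R.
  by rewrite gt_eqF // hN; apply: ltr_pwDl; rewrite ?divr_gt0 ?divr_ge0 ?ler0n ?ltW.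
have hden : (1 + t) ^+ 2 * n%:R != d%:R :> R.
  by rewrite -subr_eq0 hN fixed_point_denominator // gt_eqF ?divr_gt0.
rewrite /Rl /Nl /Sigma ridgeR_isotropic // ridgeN_isotropic // hN.
by apply: isotropic_ridge_identity => //; rewrite gt_eqF.
Qed.
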